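(* Let $n,m$ be positive integers, $Q$ an integer valued positive definite quadratic form on $\mathbb{Z}^n$, and $1=m_1<\cdots<m_l=m$ the positive divisors of $m$. Let $S_i=\{(k_1,\dots,k_n)\in\mathbb{Z}^n:\gcd(k_1,m)=m_i\}$ and $T_i=\{(k_1,\dots,k_n)\in\mathbb{Z}^n:m_i\mid k_1\}$, and for a subset $T\subset\mathbb{Z}^n$ set $\Theta_{Q,T}(q)=\sum_{(k_1,\dots,k_n)\in T}q^{Q(k_1,\dots,k_n)}$. Then for each $i$, both $\Theta_{Q,T_i}(q)$ and $\Theta_{Q,S_i}(q)$ are $\mathbb{Z}$-linear combinations of theta series $\Theta_{Q'}(q)=\sum_{k\in\mathbb{Z}^n}q^{Q'(k)}$ of integer valued positive definite quadratic forms $Q'$ on $\mathbb{Z}^n$.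
   Context: An integer valued positive definite quadratic form on $\mathbb{Z}^n$ is a quadratic form taking integer values on $\mathbb{Z}^n$ and positive definite over $\mathbb{R}$. *)

From HB Require Import structures.
From mathcomp Require Import all_boot all_order all_algebra.
From mathcomp Require Import finmap.
From mathcomp Require Import boolp classical_sets cardinality.
From mathcomp Require Import Rstruct.
From Stdlib Require Import Reals.
Set Implicit Arguments. Unset Strict Implicit. Unset Printing Implicit Defensive.
Import Order.TTheory GRing.Theory Num.Theory.
Local Open Scope ring_scope.

(* An integer valued quadratic form on Z^n is represented by an integer
   coefficient matrix A: Q_A(k) = sum_{i,j} A_ij k_i k_j.  Every integer valued
   quadratic form arises this way (take A upper triangular). *)
Definition qf (n : nat) (A : 'M[int]_n) (k : 'rV[int]_n) : int :=
  \sum_(i < n) \sum_(j < n) A i j * k 0 i * k 0 j.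

Definition qfR (n : nat) (A : 'M[int]_n) (x : 'rV[R]_n) : R :=
  \sum_(i < n) \sum_(j < n) (A i j)%:~R * x 0 i * x 0 j.

Definition posdef (n : nat) (A : 'M[int]_n) : Prop :=
  forall x : 'rV[R]_n, x != 0 -> 0 < qfR A x.

(* Coefficient of q^N in Theta_{Q,T}(q) = sum_{k in T} q^{Q(k)}, i.e. the number
   of k in T with Q(k) = N (the set is finite when Q is positive definite). *)
Definition theta_coef (n : nat) (A : 'M[int]_n) (T : set 'rV[int]_n) (N : nat)
  : nat :=
  #|` fset_set [set k | T k /\ qf A k = N%:Z] |%fset.

(* Theta_{Q,T} is a Z-linear combination of theta series Theta_{Q'} of integer
   valued positive definite quadratic forms Q' on Z^n (equality of formal
   power series in q, coefficientwise). *)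
Definition Zcomb_of_thetas (n : nat) (A : 'M[int]_n) (T : set 'rV[int]_n)
  : Prop :=
  exists s : seq (int * 'M[int]_n),
    (forall p, p \in s -> posdef p.2) /\
    forall N : nat,
      (theta_coef A T N)%:Z
      = \sum_(p <- s) p.1 * (theta_coef p.2 setT N)%:Z.

From Stdlib Require Import Reals.
From HB Require Import structures.
From mathcomp Require Import all_boot all_order all_algebra.
From mathcomp Require Import finmap.
From mathcomp Require Import boolp classical_sets functions cardinality.
From mathcomp Require Import Rstruct Rstruct_topology topology normedtype derive.
From mathcomp Require Import zify.
Set Implicit Arguments. Unset Strict Implicit. Unset Printing Implicit Defensive.
Import Order.TTheory GRing.Theory Num.Theory.
Local Open Scope ring_scope.
Local Open Scope classical_set_scope.

(* For d > 0, (k_1, k_2, ..., k_n) |-> (d k_1, k_2, ..., k_n) is a bijection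
   from Z^n onto T_d carrying Q to Q_d(k) = Q(d k_1, k_2, ..., k_n), which is
   again integral and positive definite; hence Theta_{Q,T_d} = Theta_{Q_d}.
   The sets S_d' with d | d' | m partition T_d, so
   Theta_{Q,S_d} = Theta_{Q,T_d} - sum_{d | d', d' <> d} Theta_{Q,S_d'},
   and downward induction on the divisor d handles S_d.  All coefficients are
   finite counts because a positive definite form satisfies Q(x) >= mu |x|^2
   for some mu > 0, its minimum on the unit sphere. *)

Lemma quad_mx (K : comNzRingType) n (M : 'M[K]_n) (x : 'rV[K]_n) :
  \sum_(i < n) \sum_(j < n) M i j * x 0 i * x 0 j = (x *m M *m x^T) 0 0.
Proof.
rewrite !mxE exchange_big /=; apply: eq_bigr => j _; rewrite !mxE mulr_suml.
by apply: eq_bigr => i _; rewrite (mulrC (M i j)).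
Qed.

Lemma qf_mx n (A : 'M[int]_n) k : qf A k = (k *m A *m k^T) 0 0.
Proof. exact: quad_mx. Qed.

Lemma qfR_mx n (A : 'M[int]_n) x :
  qfR A x = (x *m map_mx (intmul 1) A *m x^T) 0 0.
Proof.
rewrite -quad_mx; apply: eq_bigr => i _; apply: eq_bigr => j _.
by rewrite mxE.
Qed.

Lemma qf_mulmx n (A P : 'M[int]_n) k : qf A (k *m P) = qf (P *m A *m P^T) k.
Proof. by rewrite !qf_mx trmx_mul !mulmxA. Qed.

Lemma qfR_mulmx n (A P : 'M[int]_n) x :
  qfR A (x *m map_mx (intmul 1) P) = qfR (P *m A *m P^T) x.
Proof. by rewrite !qfR_mx !map_mxM -map_trmx trmx_mul !mulmxA. Qed.

Lemma qfR_map_int n (A : 'M[int]_n) k :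
  qfR A (map_mx (intmul 1) k) = (qf A k)%:~R.
Proof. by rewrite qfR_mx qf_mx map_trmx -!map_mxM mxE. Qed.

Lemma qfRZ n (A : 'M[int]_n) t x : qfR A (t *: x) = t ^+ 2 * qfR A x.
Proof. by rewrite !qfR_mx linearZ /= -!scalemxAl -scalemxAr scalerA !mxE expr2. Qed.

Lemma posdef_mulmx n (A P : 'M[int]_n) :
  \det P != 0 -> posdef A -> posdef (P *m A *m P^T).
Proof.
move=> detP pA x x0; rewrite -qfR_mulmx; apply: pA.
have Pu : (map_mx (intmul 1) P : 'M[R]_n) \in unitmx.
  by rewrite unitmxE det_map_mx unitfE intr_eq0.
by apply: contraNneq x0 => xP0; rewrite -(mulmxK Pu x) xP0 mul0mx.
Qed.

Lemma continuous_sum (T : topologicalType) (I : finType) (f : I -> T -> R) :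
  (forall i, continuous (f i)) -> continuous (fun x => \sum_i f i x).
Proof.
move=> fc; suff : forall s : seq I, continuous (fun x => \sum_(i <- s) f i x).
  by apply.
elim=> [|i s IHs].
  rewrite (_ : (fun x => _) = fun=> 0); first exact: cst_continuous.
  by apply/funext => y; rewrite big_nil.
rewrite (_ : (fun x => _) = f i + fun x => \sum_(j <- s) f j x).
  by move=> x; exact: (@continuousD R R^o T _ _ x (fc i x) (IHs x)).
by apply/funext => y; rewrite big_cons.
Qed.

Lemma qfR_continuous n (A : 'M[int]_n) : continuous (qfR A).
Proof.
apply: continuous_sum => i; apply: continuous_sum => j z.
have cA : {for z, continuous (fun=> ((A i j)%:~R : R))} by exact: cst_continuous.
have ci := @coord_continuous R 1 n 0 i z.
have cj := @coord_continuous R 1 n 0 j z.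
exact: continuousM (continuousM cA ci) cj.
Qed.

Lemma posdef_sphere_min n (A : 'M[int]_n.+1) : posdef A ->
  exists2 mu : R, 0 < mu & forall x, `|x| = 1 -> mu <= qfR A x.
Proof.
move=> pA; set sphere := [set x : 'rV[R]_n.+1 | `|x| = 1].
have sphere0 : sphere !=set0.
  pose x : 'rV[R]_n.+1 := const_mx 1.
  have x0 : x != 0.
    by apply/eqP => /matrixP/(_ 0 0); rewrite !mxE => /eqP; rewrite oner_eq0.
  exists (`|x|^-1 *: x); rewrite /sphere /= normrZ ger0_norm ?invr_ge0 //.
  by rewrite mulVf // normr_eq0.
have sphere_compact : compact sphere.
  apply: bounded_closed_compact.
    by exists 1; split => // M M1 x /= ->; rewrite ltW.
  rewrite (_ : sphere = Num.norm @^-1` [set 1]) //.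
  apply: preimage_closed; last exact: closed_eq.
  by move=> y _; exact: norm_continuous.
have [c /set_mem c1 cmin] :=
  EVT_min_rV sphere0 sphere_compact (continuous_subspaceT (@qfR_continuous _ A)).
exists (qfR A c) => [|x x1]; last by apply: cmin; rewrite inE.
by apply: pA; apply: contra_eq_neq c1 => ->; rewrite normr0 eq_sym oner_neq0.
Qed.

Lemma qfR0 n (A : 'M[int]_n) : qfR A 0 = 0.
Proof. by rewrite qfR_mx !mul0mx mxE. Qed.

Lemma posdef_coercive n (A : 'M[int]_n.+1) : posdef A ->
  exists2 mu : R, 0 < mu & forall x, mu * `|x| ^+ 2 <= qfR A x.
Proof.
move=> pA; have [mu mu0 sphere_min] := posdef_sphere_min pA.
exists mu => // x; have [->|x0] := eqVneq x 0; first by rewrite normr0 qfR0 expr0n mulr0.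
have nx0 : `|x| != 0 by rewrite normr_eq0.
rewrite -{2}[x]scale1r -(divff nx0) -scalerA qfRZ mulrC ler_wpM2l ?sqr_ge0 //.
by apply: sphere_min; rewrite normrZ normfV normr_id mulVf.
Qed.

Lemma normr_coord_le n (x : 'rV[R]_n) i : `|x 0 i| <= `|x|.
Proof.
by rewrite [leRHS]/Num.norm /= mx_normrE; apply/bigmax_geP; right; exists (0, i).
Qed.

Lemma box_finite n (B : nat) :
  finite_set [set k : 'rV[int]_n | forall i, `|k 0 i| <= B%:Z].
Proof.
pose f (u : 'rV['I_(2 * B).+1]_n) : 'rV[int]_n := \row_i ((u 0 i : nat)%:Z - B%:Z).
apply: (@sub_finite_set _ _ (f @` setT)); last exact: finite_image.
move=> k /= kB; exists (\row_i (inord (absz (k 0 i + B%:Z)))) => //.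
apply/rowP => i; rewrite !mxE.
have := kB i; rewrite ler_norml => /andP[kiB1 kiB2].
have kiB_ge0 : 0 <= k 0 i + B%:Z by lia.
rewrite inordK; last by rewrite -ltz_nat gez0_abs //; lia.
by rewrite gez0_abs // addrK.
Qed.

Lemma qf_level_finite n (A : 'M[int]_n.+1) (N : int) : posdef A ->
  finite_set [set k | qf A k = N].
Proof.
move=> pA; have [mu mu0 coercive] := posdef_coercive pA.
set M := `|N%:~R : R| / mu; have M_ge0 : 0 <= M by rewrite divr_ge0 // ltW.
apply: (sub_finite_set _ (box_finite _ (Num.Def.archi_bound M))) => k /= qk i.
set x := map_mx (intmul 1) k : 'rV[R]_n.+1.
have ki_le : `|x 0 i| ^+ 2 <= M.
  rewrite ler_pdivlMr // mulrC; apply: le_trans (ler_norm _).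
  rewrite -qk -qfR_map_int; apply: le_trans (coercive x).
  apply: ler_wpM2l; first exact: ltW.
  by rewrite lerXn2r ?nnegrE // normr_coord_le.
have ki_le_sqr : `|k 0 i| <= `|k 0 i| ^+ 2 by rewrite expr2; nia.
suff : `|k 0 i| ^+ 2 < (Num.Def.archi_bound M)%:Z by move/(le_lt_trans ki_le_sqr)/ltW.
rewrite -(ltr_int R); apply: le_lt_trans (archi_boundP M_ge0).
by move: ki_le; rewrite mxE -intr_norm -rmorphXn.
Qed.

Lemma theta_coef_sum n (A : 'M[int]_n.+1) (T : set 'rV[int]_n.+1)
    (P : pred 'rV[int]_n.+1) N :
  posdef A -> (forall k, T k <-> P k) ->
  theta_coef A T N = (\sum_(k <- fset_set [set k | qf A k = N%:Z]) P k)%N.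
Proof.
move=> pA TP; have level_fin := qf_level_finite N%:Z pA.
have TP_fin : finite_set [set k | T k /\ qf A k = N%:Z].
  by apply: sub_finite_set level_fin => k [].
rewrite /theta_coef; set L := fset_set [set k | qf A k = N%:Z].
have -> : fset_set [set k | T k /\ qf A k = N%:Z] = [fset k in seq.filter P L]%fset.
  apply/fsetP => k; rewrite in_fset_set // !inE mem_filter in_fset_set //.
  apply/idP/idP => [/set_mem[/TP Pk qk] | /andP[Pk /set_mem qk]].
    by rewrite Pk; apply/mem_set.
  by apply/mem_set; split => //; exact/TP.
rewrite card_fseq undup_id ?filter_uniq ?fset_uniq // size_filter -sum1_count.
by rewrite big_mkcond.
Qed.

Lemma theta_coef_image n (A B : 'M[int]_n.+1) (f : 'rV[int]_n.+1 -> 'rV[int]_n.+1)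
    (T : set 'rV[int]_n.+1) N :
  posdef B -> injective f -> (forall k, qf A (f k) = qf B k) ->
  theta_coef A (f @` T) N = theta_coef B T N.
Proof.
move=> pB f_inj qfAf; rewrite /theta_coef.
have TB_fin : finite_set [set k | T k /\ qf B k = N%:Z].
  by apply: sub_finite_set (qf_level_finite N%:Z pB) => k [].
suff -> : [set k | (f @` T) k /\ qf A k = N%:Z]
         = f @` [set k | T k /\ qf B k = N%:Z].
  by rewrite fset_set_image // card_imfset.
apply/seteqP; split => [_ [[k Tk <-] qk] | _ [k [Tk qk] <-]].
  by exists k => //; split; rewrite // -qfAf.
by split; [exists k | rewrite qfAf].
Qed.

Definition dilate_first n (d : int) : 'M[int]_n.+1 :=
  diag_mx (\row_i (if i == ord0 then d else 1)).

Lemma det_dilate_first n d : \det (dilate_first n d) = d.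
Proof. by rewrite det_diag big_ord_recl !mxE eqxx big1 ?mulr1 // => i _; rewrite mxE. Qed.

Lemma mul_dilate_first n d (k : 'rV[int]_n.+1) i :
  (k *m dilate_first n d) 0 i = k 0 i * (if i == ord0 then d else 1).
Proof. by rewrite mul_mx_diag !mxE. Qed.

Lemma dilate_first_inj n d : d != 0 -> injective (@mulmx _ 1 _ _ ^~ (dilate_first n d)).
Proof.
move=> d0 k1 k2 /rowP k12; apply/rowP => i; have := k12 i.
by rewrite !mul_dilate_first; apply: mulIf; case: ifP.
Qed.

Lemma image_dilate_first n d : d != 0 ->
  @mulmx _ 1 _ _ ^~ (dilate_first n d) @` setT = [set k | (d %| k ord0 ord0)%Z].
Proof.
move=> d0; apply/seteqP; split => [_ [k _ <-] | k /= /dvdzP[q kq]].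
  by rewrite /= mul_dilate_first eqxx dvdz_mull.
exists (\row_i (if i == ord0 then q else k ord0 i)) => //.
apply/rowP => i; rewrite mul_dilate_first mxE.
by case: eqP => [->|_]; rewrite ?mulr1.
Qed.

(* [Zcomb_of_thetas A T] is [theta_span (fun N => (theta_coef A T N)%:Z)]. *)
Definition theta_span n (c : nat -> int) : Prop :=
  exists s : seq (int * 'M[int]_n),
    (forall p, p \in s -> posdef p.2) /\
    forall N, c N = \sum_(p <- s) p.1 * (theta_coef p.2 setT N)%:Z.

Lemma eq_theta_span n (c1 c2 : nat -> int) :
  c1 =1 c2 -> theta_span n c1 -> theta_span n c2.
Proof. by move=> c12 [s [s_pos c1E]]; exists s; split=> // N; rewrite -c12. Qed.

Lemma theta_span_theta n (B : 'M[int]_n) :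
  posdef B -> theta_span n (fun N => (theta_coef B setT N)%:Z).
Proof.
move=> pB; exists [:: (1, B)]; split=> [p|N]; last by rewrite big_seq1 mul1r.
by rewrite inE => /eqP ->.
Qed.

Lemma theta_span0 n : theta_span n (fun=> 0).
Proof. by exists [::]; split=> // N; rewrite big_nil. Qed.

Lemma theta_spanD n c1 c2 :
  theta_span n c1 -> theta_span n c2 -> theta_span n (fun N => c1 N + c2 N).
Proof.
move=> [s1 [s1_pos c1E]] [s2 [s2_pos c2E]]; exists (s1 ++ s2); split.
  by move=> p; rewrite mem_cat => /orP[]; [exact: s1_pos | exact: s2_pos].
by move=> N; rewrite big_cat c1E c2E.
Qed.

Lemma theta_spanN n c : theta_span n c -> theta_span n (fun N => - c N).
Proof.
move=> [s [s_pos cE]]; exists [seq (- p.1, p.2) | p <- s]; split.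
  by move=> _ /mapP[p ps ->]; exact: (s_pos _ ps).
by move=> N; rewrite big_map cE -sumrN; apply: eq_bigr => p _; rewrite mulNr.
Qed.

Lemma theta_span_sum n (I : eqType) (r : seq I) (P : pred I) (c : I -> nat -> int) :
  (forall i, i \in r -> P i -> theta_span n (c i)) ->
  theta_span n (fun N => \sum_(i <- r | P i) c i N).
Proof.
elim: r => [|i r IHr] c_span.
  by apply: eq_theta_span (theta_span0 n) => N; rewrite big_nil.
have {IHr} IHr := IHr (fun j jr => c_span j (@mem_behead _ (i :: r) j jr)).
case Pi: (P i).
  apply: eq_theta_span (theta_spanD (c_span i (mem_head i r) Pi) IHr) => N.
  by rewrite big_cons Pi.
by apply: eq_theta_span IHr => N; rewrite big_cons Pi.
Qed.

Lemma theta_span_first_dvd n (A : 'M[int]_n.+1) (d : int) :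
  d != 0 -> posdef A ->
  Zcomb_of_thetas A [set k : 'rV[int]_n.+1 | (d %| k ord0 ord0)%Z].
Proof.
move=> d0 pA; set D := dilate_first n d.
have pAD : posdef (D *m A *m D^T).
  by apply: posdef_mulmx; rewrite ?det_dilate_first.
rewrite -image_dilate_first //.
apply: eq_theta_span (theta_span_theta pAD) => N; congr Posz; symmetry.
apply: theta_coef_image => //; [exact: dilate_first_inj | exact: qf_mulmx].
Qed.

Lemma dvdz_sum_gcdz_eq (m d : nat) (z : int) : (0 < m)%N -> (d %| m)%N ->
  ((d%:Z %| z)%Z : nat)
  = (\sum_(d' <- divisors m | (d %| d')%N) (gcdz z m%:Z == d'%:Z))%N.
Proof.
(* Only d' = gcd(z, m) contributes, and d divides it iff d divides z. *)
move=> m0 dm; set g := gcdn `|z|%N m.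
have gm : g \in divisors m by rewrite -dvdn_divisors // dvdn_gcdr.
under eq_bigr => d' _ do rewrite /gcdz eqz_nat -/g.
rewrite big_mkcond (bigD1_seq g) ?divisors_uniq //= eqxx big1 ?addn0.
  by rewrite dvdn_gcd dm andbT dvdzE absz_nat.
by move=> d' /negbTE; rewrite eq_sym => ->; case: ifP.
Qed.

Lemma theta_coef_first_dvd_partition n (A : 'M[int]_n.+1) (m d N : nat) :
  (0 < m)%N -> posdef A -> (d %| m)%N ->
  theta_coef A [set k | (d%:Z %| k ord0 ord0)%Z] N
  = (\sum_(d' <- divisors m | (d %| d')%N)
       theta_coef A [set k | gcdz (k ord0 ord0) m%:Z = d'%:Z] N)%N.
Proof.
move=> m0 pA dm.
under eq_bigr => d' _ do rewrite (@theta_coef_sum _ A _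
  (fun k => gcdz (k ord0 ord0) m%:Z == d'%:Z) _ pA (fun k => rwP eqP)).
rewrite (@theta_coef_sum _ _ _ (fun k => d%:Z %| k ord0 ord0)%Z) // exchange_big.
by apply: eq_bigr => k _; exact: dvdz_sum_gcdz_eq.
Qed.

Lemma theta_span_first_gcdz n (A : 'M[int]_n.+1) (m d : nat) :
  (0 < m)%N -> posdef A -> d \in divisors m ->
  Zcomb_of_thetas A [set k : 'rV[int]_n.+1 | gcdz (k ord0 ord0) m%:Z = d%:Z].
Proof.
move=> m0 pA; have [K] := ubnP (m - d); elim: K d => // K IHK d mdK dm.
rewrite -dvdn_divisors // in dm; have d0 := dvdn_gt0 m0 dm.
pose S d' N := (theta_coef A [set k | gcdz (k ord0 ord0) m%:Z = d'%:Z] N)%:Z.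
have S_span : forall d', (d' \in divisors m) -> (d %| d')%N -> d' != d ->
    theta_span n.+1 (S d').
  move=> d' d'm dd' d'd; apply: IHK (d'm); rewrite -dvdn_divisors // in d'm.
  have := dvdn_leq (dvdn_gt0 m0 d'm) dd'; have := dvdn_leq m0 d'm.
  by move: d'd => /eqP; lia.
pose Sc d' := (d %| d')%N && (d' != d).
apply: (@eq_theta_span _ (fun N =>
  (theta_coef A [set k | (d%:Z %| k ord0 ord0)%Z] N)%:Z
  - \sum_(d' <- divisors m | Sc d') S d' N)).
  move=> N; rewrite (theta_coef_first_dvd_partition N m0 pA dm).
  rewrite (big_morph Posz PoszD erefl) -big_filter (bigD1_seq d) /=.
  - by rewrite big_filter_cond addrK.
  - by rewrite mem_filter dvdnn -dvdn_divisors.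
  - by rewrite filter_uniq ?divisors_uniq.
have T_span := @theta_span_first_dvd _ _ d%:Z (lt0n_neq0 d0) pA.
apply: (theta_spanD T_span); apply: theta_spanN.
by apply: theta_span_sum => d' d'm /andP[]; exact: S_span.
Qed.

Theorem lemma3p4 (n' m : nat) (A : 'M[int]_n'.+1) :
  (0 < m)%N -> posdef A ->
  forall d : nat, d \in divisors m ->
    Zcomb_of_thetas A [set k : 'rV[int]_n'.+1 | (d%:Z %| k ord0 ord0)%Z]
    /\ Zcomb_of_thetas A
         [set k : 'rV[int]_n'.+1 | gcdz (k ord0 ord0) m%:Z = d%:Z].
Proof.
move=> m0 pA d dm.
have d0 : (0 < d)%N by rewrite (dvdn_gt0 m0) // dvdn_divisors.
split; last exact: theta_span_first_gcdz.
exact: @theta_span_first_dvd _ _ d%:Z (lt0n_neq0 d0) pA.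
Qed.
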